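(* Let $A$ be a left counital bialgebra and let $\mu_T:\mathbf{k}\to Ш(A)$, $c\mapsto c1_A$. Then $(Ш(A),\diamond,\mu_T,\Delta_T,\varepsilon_T,P_r)$ is a left counital cocycle bialgebra; that is: $(Ш(A),\diamond,\mu_T)$ is a commutative unital algebra on which $P_r$ is a Nijenhuis operator; $\Delta_T$ and $\varepsilon_T$ are algebra homomorphisms; $\Delta_T$ is coassociative; $(\varepsilon_T\otimes\mathrm{id})\Delta_T=\beta_\ell$ (where $\beta_\ell(\mathfrak a)=1\otimes\mathfrak a$); and the one-cocycle property $\Delta_TP_r=(\mathrm{id}\otimes P_r)\Delta_T$ holds.
   Context: Throughout, $\mathbf{k}$ is a commutative unital ring, all algebras are unital commutative $\mathbf{k}$-algebras, tensor products are over $\mathbf{k}$. A left counital bialgebra $(H,m,\mu,\Delta,\varepsilon)$ is an algebra $H$ with algebra homomorphisms $\Delta:H\to H\otimes H$ (coassociative) and $\varepsilon:H\to\mathbf{k}$ satisfying left counicity $(\varepsilon\otimes\mathrm{id})\Delta=\beta_\ell$, where $\beta_\ell(u)=1\otimes u$; right counicity is not required. A Nijenhuis operator on an algebra $R$ is a linear $P:R\to R$ with $P(x)P(y)=P(P(x)y)+P(xP(y))-P^2(xy)$. For an algebra $A$ with unit $1_A$, $Ш(A)=\bigoplus_{n\ge1}A^{\otimes n}$, $P_r(\mathfrak a)=1_A\otimes\mathfrak a$, and the product $\diamond$ is defined bilinearly on pure tensors $\mathfrak a=a_1\otimes\mathfrak a'\in A^{\otimes m}$, $\mathfrak b=b_1\otimes\mathfrak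 b'\in A^{\otimes n}$ by: $a_1b_1$ if $m=n=1$; $a_1b_1\otimes\mathfrak b'$ if $m=1,n\ge2$; $a_1b_1\otimes\mathfrak a'$ if $m\ge2,n=1$; $a_1b_1\otimes\big(\mathfrak a'\diamond(1_A\otimes\mathfrak b')+(1_A\otimes\mathfrak a')\diamond\mathfrak b'-1_A\otimes(\mathfrak a'\diamond\mathfrak b')\big)$ if $m,n\ge2$. $Ш(A)\otimes Ш(A)$ has the product $\bullet$, $(x\otimes y)\bullet(x'\otimes y')=(x\diamond x')\otimes(y\diamond y')$, and $A\otimes A\subseteq Ш(A)\otimes Ш(A)$ via $A=A^{\otimes1}$. When $A$ is a left counital bialgebra with coproduct $\Delta_A$ and counit $\varepsilon_A$: the linear map $\Delta_T:Ш(A)\to Ш(A)\otimes Ш(A)$ is defined on pure tensors by induction on tensor length: $\Delta_T(a)=\Delta_A(a)$ for $a\in A$, and for $\mathfrak a'\in A^{\otimes n}$, $\Delta_T(1_A\otimes\mathfrak a')=(\mathrm{id}\otimes P_r)\Delta_T(\mathfrak a')$ and $\Delta_T(a_1\otimes\mathfrak a')=\Delta_A(a_1)\bullet(\mathrm{id}\otimes P_r)\Delta_T(\mathfrak a')$; and $\varepsilon_T:Ш(A)\to\mathbf{k}$ is the linear map $\varepsilon_T(a_1\otimes\cdots\otimes a_n)=\varepsilon_A(a_1)\cdots\varepsilon_A(a_n)$. *)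

From HB Require Import structures.
From mathcomp Require Import all_boot all_order all_algebra.
Set Implicit Arguments.
Unset Strict Implicit.
Unset Printing Implicit Defensive.
Import GRing.Theory.
Local Open Scope ring_scope.

(* Tensor products over a commutative ring k are modelled by formal finite
   k-linear combinations of "pure tensors" (lists of pairs (coefficient, pure
   tensor)), two combinations being identified when every multilinear map into
   every k-module takes the same value on them (this is exactly equality in the
   tensor product). *)

Section Tensors.
Variables (k : comPzRingType) (A : comPzRingType) (iota : {rmorphism k -> A}).
(* A is a commutative unital k-algebra, given by its structure map iota;
   scalar multiplication is c . a := iota c * a. *)

Definition fcomb (X : Type) := seq (k * X).

Definition scalec (X : Type) (c : k) (x : fcomb X) : fcomb X :=
  [seq (c * p.1, p.2) | p <- x].

Definition negc (X : Type) (x : fcomb X) : fcomb X := scalec (-1) x.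

Definition feval (X : Type) (M : lmodType k) (f : X -> M) (x : fcomb X) : M :=
  \sum_(p <- x) p.1 *: f p.2.

Definition multilin (M : lmodType k) (f : seq A -> M) : Prop :=
  forall (u v : seq A) (c : k) (a b : A),
    f (u ++ (iota c * a + b) :: v) = c *: f (u ++ a :: v) + f (u ++ b :: v).

Definition lin1 (M : lmodType k) (f : A -> M) : Prop :=
  forall (c : k) (a b : A), f (iota c * a + b) = c *: f a + f b.

Definition eqAA (x y : fcomb (A * A)) : Prop :=
  forall (M : lmodType k) (f : A -> A -> M),
    (forall b, lin1 (f^~ b)) -> (forall a, lin1 (f a)) ->
    feval (fun p => f p.1 p.2) x = feval (fun p => f p.1 p.2) y.

Definition eqAAA (x y : fcomb (A * A * A)) : Prop :=
  forall (M : lmodType k) (f : A -> A -> A -> M),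
    (forall b d, lin1 (fun a => f a b d)) ->
    (forall a d, lin1 (fun b => f a b d)) ->
    (forall a b, lin1 (fun d => f a b d)) ->
    feval (fun p => f p.1.1 p.1.2 p.2) x = feval (fun p => f p.1.1 p.1.2 p.2) y.

Definition mulAA (x y : fcomb (A * A)) : fcomb (A * A) :=
  [seq (p.1 * q.1, (p.2.1 * q.2.1, p.2.2 * q.2.2)) | p <- x, q <- y].

Definition left_counital_bialgebra (DA : A -> fcomb (A * A)) (eA : A -> k) : Prop :=
  [/\
      (forall c a b, eqAA (DA (iota c * a + b)) (scalec c (DA a) ++ DA b)),
      (forall a b, eqAA (DA (a * b)) (mulAA (DA a) (DA b)))
        /\ eqAA (DA 1) [:: (1, (1, 1))],
      (forall a, eqAAA
         (flatten [seq [seq (p.1 * q.1, (q.2.1, q.2.2, p.2.2)) | q <- DA p.2.1] | p <- DA a])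
         (flatten [seq [seq (p.1 * q.1, (p.2.1, q.2.1, q.2.2)) | q <- DA p.2.2] | p <- DA a])),
      (forall c a b, eA (iota c * a + b) = c * eA a + eA b)
        /\ (forall a b, eA (a * b) = eA a * eA b) /\ eA 1 = 1 &
      (* left counicity  (eps (x) id) Delta = beta_l, with k (x) A = A *)
      (forall a, \sum_(p <- DA a) iota (p.1 * eA p.2.1) * p.2.2 = a)].

(* a nonempty word a1 (x) ... (x) an is stored as (a1, [:: a2; ...; an]) *)
Definition nw := (A * seq A)%type.
Definition wd (w : nw) : seq A := w.1 :: w.2.

Definition Sha := fcomb nw.
Definition Sha2 := fcomb (nw * nw).
Definition Sha3 := fcomb (nw * nw * nw).

Definition eqSh (x y : Sha) : Prop :=
  forall (M : lmodType k) (f : seq A -> M), multilin f ->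
    feval (fun w => f (wd w)) x = feval (fun w => f (wd w)) y.

Definition eqSh2 (x y : Sha2) : Prop :=
  forall (M : lmodType k) (f : seq A -> seq A -> M),
    (forall v, multilin (f^~ v)) -> (forall u, multilin (f u)) ->
    feval (fun p => f (wd p.1) (wd p.2)) x = feval (fun p => f (wd p.1) (wd p.2)) y.

Definition eqSh3 (x y : Sha3) : Prop :=
  forall (M : lmodType k) (f : seq A -> seq A -> seq A -> M),
    (forall v w, multilin (fun u => f u v w)) ->
    (forall u w, multilin (fun v => f u v w)) ->
    (forall u v, multilin (fun w => f u v w)) ->
    feval (fun p => f (wd p.1.1) (wd p.1.2) (wd p.2)) x
    = feval (fun p => f (wd p.1.1) (wd p.1.2) (wd p.2)) y.

Definition prefix (a : A) (x : Sha) : Sha := [seq (p.1, (a, wd p.2)) | p <- x].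

(* the product on pure tensors (a1 (x) a') <> (b1 (x) b'), by recursion with
   fuel n (n = size a' + size b' + 1 is enough) *)
Fixpoint diaw (n : nat) (a1 : A) (a' : seq A) (b1 : A) (b' : seq A) : Sha :=
  match n with
  | 0 => [::]
  | n'.+1 =>
    match a', b' with
    | [::], [::] => [:: (1, (a1 * b1, [::]))]
    | [::], _ :: _ => [:: (1, (a1 * b1, b'))]
    | _ :: _, [::] => [:: (1, (a1 * b1, a'))]
    | a2 :: a'', b2 :: b'' =>
        prefix (a1 * b1)
          (diaw n' a2 a'' 1 b' ++ diaw n' 1 a' b2 b''
           ++ negc (prefix 1 (diaw n' a2 a'' b2 b'')))
    end
  end.

Definition dia_word (x y : nw) : Sha :=
  diaw (size x.2 + size y.2).+1 x.1 x.2 y.1 y.2.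

Definition dia (x y : Sha) : Sha :=
  flatten [seq scalec (p.1 * q.1) (dia_word p.2 q.2) | p <- x, q <- y].

Definition muT (c : k) : Sha := [:: (c, (1, [::]))].

Definition Pr (x : Sha) : Sha := [seq (p.1, (1, wd p.2)) | p <- x].

Definition bul (x y : Sha2) : Sha2 :=
  flatten [seq [seq (p.1 * q.1 * r.1 * s.1, (r.2, s.2))
               | r <- dia_word p.2.1 q.2.1, s <- dia_word p.2.2 q.2.2]
          | p <- x, q <- y].

Definition unit2 : Sha2 := [:: (1, ((1, [::]), (1, [::])))].

Definition idPr (x : Sha2) : Sha2 := [seq (p.1, (p.2.1, (1, wd p.2.2))) | p <- x].

Definition liftAA (x : fcomb (A * A)) : Sha2 :=
  [seq (p.1, ((p.2.1, [::]), (p.2.2, [::]))) | p <- x].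

Section Coproduct.
Variables (DA : A -> fcomb (A * A)) (eA : A -> k).

Fixpoint DTl (a1 : A) (a' : seq A) : Sha2 :=
  match a' with
  | [::] => liftAA (DA a1)
  | a2 :: a'' =>
      if a1 == 1 then idPr (DTl a2 a'')
      else bul (liftAA (DA a1)) (idPr (DTl a2 a''))
  end.

Definition DT (x : Sha) : Sha2 :=
  flatten [seq scalec p.1 (DTl p.2.1 p.2.2) | p <- x].

Definition eTw (w : nw) : k := eA w.1 * \prod_(a <- w.2) eA a.

Definition eT (x : Sha) : k := \sum_(p <- x) p.1 * eTw p.2.

Definition DT_id (y : Sha2) : Sha3 :=
  flatten [seq [seq (p.1 * q.1, (q.2.1, q.2.2, p.2.2)) | q <- DTl p.2.1.1 p.2.1.2]
          | p <- y].

Definition id_DT (y : Sha2) : Sha3 :=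
  flatten [seq [seq (p.1 * q.1, (p.2.1, q.2.1, q.2.2)) | q <- DTl p.2.2.1 p.2.2.2]
          | p <- y].

(* (eps_T (x) id) Delta_T, with k (x) Sha(A) = Sha(A) *)
Definition eT_id (y : Sha2) : Sha := [seq (p.1 * eTw p.2.1, p.2.2) | p <- y].

End Coproduct.
End Tensors.

From Pilot Require Import Defs.
From HB Require Import structures.
From mathcomp Require Import all_boot all_order all_algebra.
From Stdlib Require Import Setoid Morphisms.
From mathcomp Require Import zify ring.
Set Implicit Arguments.
Unset Strict Implicit.
Unset Printing Implicit Defensive.
Import GRing.Theory.
Local Open Scope ring_scope.

(* Elements of Sha(A) are formal combinations of words, equal in Sha(A) exactly
   when every multilinear evaluation agrees on them ([eqShE]); so every operation
   is shown to respect that equality, and identities are checked word by word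
   (most of them even hold under arbitrary evaluations).
   The recursion  (a (x) u) <> (b (x) v) = ab (x) (u <> P v + P u <> v - P (u <> v))
   is, for a = b = 1, the Nijenhuis identity, and its one-letter case
   a <> (b (x) v) = ab (x) v gives a (x) u = a <> P u.
   Associativity of <> and multiplicativity of Delta_T follow by induction on the
   total length of the words, the inductive step being a computation with the
   Nijenhuis identity; in particular Delta_T (a (x) u) = Delta_A a * (id (x) P) Delta_T u.
   Coassociativity and left counicity then reduce, by induction on the length of a
   word, to the same properties of A, since Delta_T (x) id, id (x) Delta_T and
   eps_T (x) id are multiplicative and commute with the operators P. *)

Section FormalCombinations.
Variable k : comPzRingType.

Lemma feval_nil T (M : lmodType k) (g : T -> M) : feval g [::] = 0.
Proof. by rewrite /feval big_nil. Qed.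

Lemma feval_cons T (M : lmodType k) (g : T -> M) p x :
  feval g (p :: x) = p.1 *: g p.2 + feval g x.
Proof. by rewrite /feval big_cons. Qed.

Lemma feval_cat T (M : lmodType k) (g : T -> M) x y :
  feval g (x ++ y) = feval g x + feval g y.
Proof. by rewrite /feval big_cat. Qed.

Lemma feval_scalec T (M : lmodType k) (g : T -> M) c x :
  feval g (scalec c x) = c *: feval g x.
Proof. by rewrite /feval big_map scaler_sumr; apply: eq_bigr => p _; rewrite scalerA. Qed.

Lemma feval_negc T (M : lmodType k) (g : T -> M) x : feval g (negc x) = - feval g x.
Proof. by rewrite feval_scalec scaleN1r. Qed.

Lemma feval_map T U (M : lmodType k) (g : U -> M) (h : T -> U) (x : fcomb k T) :
  feval g [seq (p.1, h p.2) | p <- x] = feval (g \o h) x.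
Proof. by rewrite /feval big_map. Qed.

Lemma feval_single T (M : lmodType k) (g : T -> M) t : feval g [:: (1, t)] = g t.
Proof. by rewrite feval_cons feval_nil addr0 scale1r. Qed.

Lemma eq_feval T (M : lmodType k) (g g' : T -> M) x :
  (forall t, g t = g' t) -> feval g x = feval g' x.
Proof. by move=> E; apply: eq_bigr => p _; rewrite E. Qed.

Lemma feval_flatten T (M : lmodType k) (g : T -> M) (l : seq (fcomb k T)) :
  feval g (flatten l) = \sum_(x <- l) feval g x.
Proof. by rewrite /feval big_flatten. Qed.

Lemma feval_bind T U (M : lmodType k) (g : U -> M) (phi : T -> fcomb k U) x :
  feval g (flatten [seq scalec p.1 (phi p.2) | p <- x]) = feval (fun t => feval g (phi t)) x.
Proof. by rewrite feval_flatten big_map; apply: eq_bigr => p _; rewrite feval_scalec. Qed.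

Lemma feval_pairs T U V (M : lmodType k) (g : V -> M) (E : k * T -> k * U -> fcomb k V)
    (x : fcomb k T) (y : fcomb k U) :
  feval g (flatten [seq E p q | p <- x, q <- y]) = \sum_(p <- x) \sum_(q <- y) feval g (E p q).
Proof. by rewrite feval_flatten big_allpairs_dep. Qed.

Lemma feval_swap T U (M : lmodType k) (h : T -> U -> M) x y :
  feval (fun u => feval (h u) y) x = feval (fun v => feval (h^~ v) x) y.
Proof.
rewrite /feval; under eq_bigr do rewrite scaler_sumr.
rewrite exchange_big; apply: eq_bigr => q _; rewrite scaler_sumr.
by apply: eq_bigr => p _; rewrite !scalerA mulrC.
Qed.

Lemma feval_add T (M : lmodType k) (g1 g2 : T -> M) x :
  feval (fun t => g1 t + g2 t) x = feval g1 x + feval g2 x.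
Proof. by rewrite /feval -big_split; apply: eq_bigr => p _; rewrite scalerDr. Qed.

Lemma feval_scale T (M : lmodType k) c (g : T -> M) x :
  feval (fun t => c *: g t) x = c *: feval g x.
Proof. by rewrite /feval scaler_sumr; apply: eq_bigr => p _; rewrite !scalerA mulrC. Qed.

Lemma feval_opp T (M : lmodType k) (g : T -> M) x : feval (fun t => - g t) x = - feval g x.
Proof. by rewrite /feval -sumrN; apply: eq_bigr => p _; rewrite scalerN. Qed.

Lemma feval_scalel T (M : lmodType k) (f : T -> k) (m : M) (X : fcomb k T) :
  feval (fun t => f t *: m) X = feval (M := k^o) f X *: m.
Proof. by rewrite /feval scaler_suml; apply: eq_bigr => p _; rewrite scalerA. Qed.

Definition feq T (x y : fcomb k T) :=
  forall (M : lmodType k) (g : T -> M), feval g x = feval g y.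

#[global] Instance feq_equiv T : Equivalence (@feq T).
Proof. by split=> [x M g|x y E M g|x y z E1 E2 M g]; rewrite ?E ?E1 ?E2. Qed.

#[global] Instance cat_feq T : Proper (@feq T ==> @feq T ==> @feq T) cat.
Proof. by move=> x x' Ex y y' Ey M g; rewrite !feval_cat Ex Ey. Qed.

#[global] Instance negc_feq T : Proper (@feq T ==> @feq T) (@negc k T).
Proof. by move=> x x' Ex M g; rewrite !feval_negc Ex. Qed.

Lemma negcK T (x : fcomb k T) : feq (negc (negc x)) x.
Proof. by move=> M g; rewrite !feval_negc opprK. Qed.

Lemma negc_cat T (x y : fcomb k T) : negc (x ++ y) = negc x ++ negc y.
Proof. exact: map_cat. Qed.

Lemma catCA T (x y z : fcomb k T) : feq (x ++ y ++ z) (y ++ x ++ z).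
Proof. by move=> M g; rewrite !feval_cat addrCA. Qed.

End FormalCombinations.

Arguments feq {k T} x y.

Section ShuffleProduct.
Variable (k A : comPzRingType).
Local Notation Sh := (Sha k A).
Local Notation dw := (dia_word k).

Definition word (w : nw A) : Sh := [:: (1, w)].
Definition letter (a : A) : Sh := word (a, [::]).

Lemma feval_word (M : lmodType k) (g : nw A -> M) (w : nw A) : feval g (word w) = g w.
Proof. exact: feval_single. Qed.

Lemma prefix_word (a x : A) s : Defs.prefix a (word (x, s)) = word (a, x :: s).
Proof. by []. Qed.

Lemma PrE (X : Sh) : Pr X = Defs.prefix 1 X.
Proof. by []. Qed.

Lemma Pr_word (w : nw A) : Pr (word w) = word (1, wd w).
Proof. by []. Qed.

Lemma feval_prefix (M : lmodType k) (g : nw A -> M) a (X : Sh) :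
  feval g (Defs.prefix a X) = feval (fun w => g (a, wd w)) X.
Proof. exact: feval_map. Qed.

Lemma feval_Pr (M : lmodType k) (g : nw A -> M) (X : Sh) :
  feval g (Pr X) = feval (fun w => g (1, wd w)) X.
Proof. exact: feval_map. Qed.

Lemma feval_dia (M : lmodType k) (g : nw A -> M) (X Y : Sh) :
  feval g (dia X Y) = feval (fun u => feval (fun v => feval g (dw u v)) Y) X.
Proof.
rewrite /dia feval_pairs; apply: eq_bigr => p _; rewrite scaler_sumr.
by apply: eq_bigr => q _; rewrite feval_scalec scalerA.
Qed.

#[global] Instance dia_feq : Proper (feq ==> feq ==> feq) (@dia k A).
Proof.
move=> X X' EX Y Y' EY M g; rewrite !feval_dia EX.
by apply: eq_feval => u; rewrite EY.
Qed.

#[global] Instance prefix_feq a : Proper (feq ==> feq) (@Defs.prefix k A a).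
Proof. by move=> X X' EX M g; rewrite !feval_prefix EX. Qed.

Lemma Pr_cat (X Y : Sh) : Pr (X ++ Y) = Pr X ++ Pr Y.
Proof. exact: map_cat. Qed.

Lemma Pr_negc (X : Sh) : feq (Pr (negc X)) (negc (Pr X)).
Proof. by move=> M g; rewrite feval_Pr !feval_negc feval_Pr. Qed.

Lemma diaw_fuel n m (a1 b1 : A) a' b' :
  (size a' + size b' < n)%N -> (size a' + size b' < m)%N ->
  diaw k n a1 a' b1 b' = diaw k m a1 a' b1 b'.
Proof.
elim: n m a1 a' b1 b' => [|n IH] [|m] a1 [|a2 a''] b1 [|b2 b''] //= Hn Hm.
rewrite !addSn !addnS !ltnS in Hn Hm.
rewrite (IH m a2 a'' 1 (b2 :: b'')) /= ?addnS ?ltnS ?(ltnW Hn) ?(ltnW Hm) //.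
rewrite (IH m 1 (a2 :: a'') b2 b'') /= ?addSn ?ltnS ?(ltnW Hn) ?(ltnW Hm) //.
by rewrite (IH m a2 a'' b2 b'') ?(ltnW Hn) ?(ltnW Hm).
Qed.

Lemma diawE n (a1 b1 : A) a' b' : (size a' + size b' < n)%N ->
  diaw k n a1 a' b1 b' = dw (a1, a') (b1, b').
Proof. by move=> H; apply: diaw_fuel. Qed.

Lemma dia_word_prefix (a b : A) (u v : nw A) : dw (a, wd u) (b, wd v) =
  Defs.prefix (a * b) (dw u (1, wd v) ++ dw (1, wd u) v ++ negc (Pr (dw u v))) :> Sh.
Proof.
case: u v => [u1 u2] [v1 v2].
have unfold1 n : diaw k n.+1 a (u1 :: u2) b (v1 :: v2) = Defs.prefix (a * b)
  (diaw k n u1 u2 1 (v1 :: v2) ++ diaw k n 1 (u1 :: u2) v1 v2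
   ++ negc (Defs.prefix 1 (diaw k n u1 u2 v1 v2))) by [].
by rewrite /dia_word /wd unfold1 !diawE //= ?addnS ?addSn // ltnS leqW.
Qed.

Lemma diaw_comm n (a1 b1 : A) a' b' (M : lmodType k) (g : nw A -> M) :
  feval g (diaw k n a1 a' b1 b') = feval g (diaw k n b1 b' a1 a').
Proof.
elim: n M g a1 a' b1 b' => [|n IH] M g a1 [|a2 a''] b1 [|b2 b''] //=; try by rewrite mulrC.
rewrite !feval_prefix !feval_cat !feval_negc !feval_prefix mulrC.
rewrite (IH _ _ a2 a'' 1) (IH _ _ 1 (a2 :: a'')) (IH _ _ a2 a'').
by rewrite addrCA.
Qed.

Lemma dia_word_comm (u v : nw A) (M : lmodType k) (g : nw A -> M) :
  feval g (dw u v) = feval g (dw v u).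
Proof. by rewrite /dia_word diaw_comm addnC. Qed.

Lemma diaC (X Y : Sh) : feq (dia X Y) (dia Y X).
Proof.
move=> M g; rewrite !feval_dia feval_swap.
by apply: eq_feval => v; apply: eq_feval => u; rewrite dia_word_comm.
Qed.

Lemma dia_catl (X1 X2 Y : Sh) : feq (dia (X1 ++ X2) Y) (dia X1 Y ++ dia X2 Y).
Proof. by move=> M g; rewrite feval_cat !feval_dia feval_cat. Qed.

Lemma dia_catr (X Y1 Y2 : Sh) : feq (dia X (Y1 ++ Y2)) (dia X Y1 ++ dia X Y2).
Proof. by rewrite diaC dia_catl !(diaC _ X). Qed.

Lemma dia_negcl (X Y : Sh) : feq (dia (negc X) Y) (negc (dia X Y)).
Proof. by move=> M g; rewrite feval_negc !feval_dia feval_negc. Qed.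

Lemma dia_negcr (X Y : Sh) : feq (dia X (negc Y)) (negc (dia X Y)).
Proof. by rewrite diaC dia_negcl diaC. Qed.

Lemma dia_letters (a b : A) : feq (dia (letter a) (letter b)) (letter (a * b)).
Proof. by move=> M g; rewrite feval_dia !feval_word. Qed.

Lemma dia_letter_prefix (a b : A) (Y : Sh) :
  feq (dia (letter a) (Defs.prefix b Y)) (Defs.prefix (a * b) Y).
Proof.
by move=> M g; rewrite feval_dia feval_word !feval_prefix; apply: eq_feval => v; apply: feval_word.
Qed.

Lemma dia_prefix_letter (a b : A) (X : Sh) :
  feq (dia (Defs.prefix a X) (letter b)) (Defs.prefix (a * b) X).
Proof. by rewrite diaC dia_letter_prefix mulrC. Qed.

Definition dia_tail (X Y : Sh) : Sh := dia X (Pr Y) ++ dia (Pr X) Y ++ negc (Pr (dia X Y)).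

Lemma dia_prefix (a b : A) (X Y : Sh) :
  feq (dia (Defs.prefix a X) (Defs.prefix b Y)) (Defs.prefix (a * b) (dia_tail X Y)).
Proof.
move=> M g; rewrite feval_dia !feval_prefix !feval_cat !feval_negc !feval_dia.
rewrite (feval_Pr _ (dia X Y)) (feval_Pr _ X) feval_dia -feval_opp -!feval_add.
apply: eq_feval => u.
rewrite feval_Pr feval_prefix -feval_opp -!feval_add; apply: eq_feval => v.
by rewrite dia_word_prefix feval_prefix !feval_cat feval_negc feval_Pr.
Qed.

Lemma Pr_Nijenhuis (X Y : Sh) : feq (dia (Pr X) (Pr Y)) (Pr (dia_tail X Y)).
Proof. by rewrite !PrE dia_prefix mulr1. Qed.

Lemma dia_unit c (X : Sh) : feq (dia (muT A c) X) (scalec c X).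
Proof.
move=> M g; rewrite feval_dia feval_scalec feval_cons feval_nil addr0.
by congr (_ *: _); apply: eq_feval => -[a [|x s]]; rewrite /= feval_single mul1r.
Qed.

Definition associative_at (X Y Z : Sh) := feq (dia (dia X Y) Z) (dia X (dia Y Z)).

Lemma associative_at_words (X Y Z : Sh) :
  (forall u v w, associative_at (word u) (word v) (word w)) -> associative_at X Y Z.
Proof.
move=> H M g; rewrite !feval_dia; under [RHS]eq_feval => u do rewrite feval_dia.
apply: eq_feval => u; apply: eq_feval => v; rewrite feval_swap; apply: eq_feval => w.
move: (H u v w M g); rewrite feval_dia; under eq_feval do rewrite feval_word.
by rewrite feval_dia !feval_word feval_dia feval_word feval_dia !feval_word.
Qed.

Lemma associative_at_prefix (a b c : A) (X Y Z : Sh) :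
  associative_at X (Pr Y) (Pr Z) -> associative_at (Pr X) Y (Pr Z) ->
  associative_at (Pr X) (Pr Y) Z -> associative_at X Y (Pr Z) ->
  associative_at X (Pr Y) Z -> associative_at (Pr X) Y Z -> associative_at X Y Z ->
  associative_at (Defs.prefix a X) (Defs.prefix b Y) (Defs.prefix c Z).
Proof.
rewrite /associative_at => h1 h2 h3 h4 h5 h6 h7.
rewrite !dia_prefix mulrA; apply: prefix_feq; rewrite /dia_tail.
rewrite -Pr_Nijenhuis -(Pr_Nijenhuis Y Z) /dia_tail.
rewrite !dia_catl !dia_catr !dia_negcl !dia_negcr !Pr_cat !Pr_negc.
rewrite (Pr_Nijenhuis (dia X Y) Z) (Pr_Nijenhuis X (dia Y Z)) /dia_tail.
rewrite !Pr_cat !Pr_negc !negc_cat !negcK h1 h2 h3 h4 h5 h6 h7.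
(* Both sides reduce to the same seven terms once P(P(X Y) Z) cancels on the
   left and P(X P(Y Z)) on the right. *)
move=> M g; rewrite !feval_cat !feval_negc !addrA.
rewrite [LHS](@GRing.add M).[ACl (1*2*6*3*7*8*5)*(4*9)].
rewrite [RHS](@GRing.add M).[ACl (1*2*3*7*8*5*6)*(4*9)].
by rewrite !addNr !addr0.
Qed.

Lemma associative_at_words_size n (u v w : nw A) :
  (size u.2 + size v.2 + size w.2 < n)%N -> associative_at (word u) (word v) (word w).
Proof.
elim: n u v w => // n IH [a [|x s]] [b [|y t]] [c [|z r]] /= Hn; rewrite -?prefix_word;
  try by rewrite /associative_at
    ?(dia_letters, dia_letter_prefix, dia_prefix_letter, dia_prefix) mulrA.
by apply: associative_at_prefix; rewrite -?Pr_word; apply: IH => /=; lia.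
Qed.

Lemma diaA (X Y Z : Sh) : feq (dia (dia X Y) Z) (dia X (dia Y Z)).
Proof.
apply: associative_at_words => u v w.
exact: (@associative_at_words_size (size u.2 + size v.2 + size w.2).+1).
Qed.
End ShuffleProduct.

Section Multilinear.
Variables (k A : comPzRingType) (iota : {rmorphism k -> A}).
Local Notation Sh := (Sha k A).
Local Notation dw := (dia_word k).

Definition mlin (M : lmodType k) (g : nw A -> M) :=
  (forall s, lin1 iota (fun a => g (a, s))) /\ (forall a, multilin iota (fun s => g (a, s))).

Lemma lin1_sum (M : lmodType k) (f : A -> M) (l : fcomb k (A * A)) (c : k * (A * A) -> k) :
  lin1 iota f -> f (\sum_(p <- l) iota (c p) * p.2.2) = \sum_(p <- l) c p *: f p.2.2.
Proof.
move=> H; have f0 : f 0 = 0.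
  have := H 1 0 0; rewrite rmorph1 mul1r addr0 scale1r => E.
  by apply: (addrI (f 0)); rewrite addr0 -E.
elim: l => [|p l IH]; first by rewrite !big_nil.
by rewrite !big_cons H IH.
Qed.

(* The empty sequence goes to the junk word [1]; multilinear maps never see it. *)
Definition nw_of_seq (s : seq A) : nw A := (head 1 s, behead s).

Lemma nw_of_seqK (w : nw A) : nw_of_seq (wd w) = w.
Proof. by case: w. Qed.

Lemma multilin_nw_of_seq (M : lmodType k) (g : nw A -> M) :
  mlin g -> multilin iota (g \o nw_of_seq).
Proof. by case=> H1 H2 [|u0 u] v c a b /=; [apply: H1 | apply: H2]. Qed.

Lemma mlin_wd (M : lmodType k) (f : seq A -> M) : multilin iota f -> mlin (fun w => f (wd w)).
Proof. by move=> H; split=> [s c a b|a0 u v c a b]; [apply: (H [::]) | apply: (H (a0 :: u))]. Qed.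

Lemma eq_mlin (M : lmodType k) (g g' : nw A -> M) :
  (forall w, g w = g' w) -> mlin g -> mlin g'.
Proof. by move=> E [H1 H2]; split=> [s c a b|a0 u v c a b]; rewrite -!E; [apply: H1|apply: H2]. Qed.

Lemma mlin_prefix (M : lmodType k) (g : nw A -> M) a : mlin g -> mlin (fun w => g (a, wd w)).
Proof.
by case=> _ H; split=> [s c x y|a0 u v c x y]; [apply: (H a [::]) | apply: (H a (a0 :: u))].
Qed.

Lemma mlin0 (M : lmodType k) : mlin (fun _ : nw A => (0 : M)).
Proof. by split=> [s c a b|a0 u v c a b]; rewrite scaler0 addr0. Qed.

Lemma mlinD (M : lmodType k) (g1 g2 : nw A -> M) :
  mlin g1 -> mlin g2 -> mlin (fun w => g1 w + g2 w).
Proof.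
case=> H1 H2 [G1 G2]; split=> [s c a b|a0 u v c a b].
- by rewrite H1 G1 scalerDr addrACA.
- by rewrite H2 G2 scalerDr addrACA.
Qed.

Lemma mlinZ (M : lmodType k) c (g : nw A -> M) : mlin g -> mlin (fun w => c *: g w).
Proof.
case=> H1 H2; split=> [s d a b|a0 u v d a b].
- by rewrite H1 scalerDr !scalerA mulrC.
- by rewrite H2 scalerDr !scalerA mulrC.
Qed.

Lemma mlinN (M : lmodType k) (g : nw A -> M) : mlin g -> mlin (fun w => - g w).
Proof. by move=> /(mlinZ (-1)); apply: eq_mlin => w; rewrite scaleN1r. Qed.

Lemma mlin_feval T (M : lmodType k) (h : nw A -> T -> M) (Y : fcomb k T) :
  (forall t, mlin (h^~ t)) -> mlin (fun w => feval (h w) Y).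
Proof.
move=> H; elim: Y => [|p Y IH].
  by apply: eq_mlin (@mlin0 M) => w; rewrite feval_nil.
by apply: eq_mlin (mlinD (mlinZ p.1 (H p.2)) IH) => w; rewrite feval_cons.
Qed.

Lemma multilin_cons_ext (M : lmodType k) (f f' : seq A -> M) :
  (forall x s, f (x :: s) = f' (x :: s)) -> multilin iota f' -> multilin iota f.
Proof.
move=> E H u v c a b.
have E' y : f (u ++ y :: v) = f' (u ++ y :: v) by case: u => [|u0 u]; rewrite /= E.
by rewrite !E' H.
Qed.

Lemma feval_diaw_head n (M : lmodType k) (g : nw A -> M) (a1 b1 : A) a' b' :
  feval g (diaw k n.+1 a1 a' b1 b') = feval (fun w => g (a1 * b1, w.2)) (diaw k n.+1 1 a' 1 b').
Proof.
by case: a' => [|a2 a'']; case: b' => [|b2 b''] /=; rewrite ?feval_single ?feval_prefix ?mulr1.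
Qed.

Lemma mlin_diaw n (M : lmodType k) (g : nw A -> M) (b1 : A) b' :
  mlin g -> mlin (fun u => feval g (diaw k n u.1 u.2 b1 b')).
Proof.
elim: n M g b1 b' => [|n IH] M g b1 b' Hg.
  by apply: eq_mlin (@mlin0 M) => w; rewrite feval_nil.
case: (Hg) => Hg1 Hg2; split=> [s c a b|a0].
  rewrite (feval_diaw_head n _ (iota c * a + b)) (feval_diaw_head n _ a).
  rewrite (feval_diaw_head n _ b) -feval_scale -feval_add.
  by apply: eq_feval => w; rewrite /= mulrDl -mulrA Hg1.
case: b' => [|b2 b''].
  apply: multilin_cons_ext (Hg2 (a0 * b1)) => x s.
  by rewrite feval_diaw_head /= feval_single.
pose g' w := g (a0 * b1, wd w).
have Hg' : mlin g' by apply: mlin_prefix.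
pose F w := feval g' (diaw k n w.1 w.2 1 (b2 :: b''))
  + feval g' (diaw k n 1 (wd w) b2 b'')
  - feval (fun w' => g' (1, wd w')) (diaw k n w.1 w.2 b2 b'').
apply: (multilin_cons_ext (f' := F \o nw_of_seq)) => [x s|].
  rewrite feval_diaw_head.
  have -> : diaw k n.+1 1 (x :: s) 1 (b2 :: b'') = Defs.prefix (1 * 1)
    (diaw k n x s 1 (b2 :: b'') ++ diaw k n 1 (x :: s) b2 b''
     ++ negc (Defs.prefix 1 (diaw k n x s b2 b''))) by [].
  by rewrite feval_prefix !feval_cat feval_negc feval_prefix addrA.
apply: multilin_nw_of_seq; apply: mlinD; first apply: mlinD.
- exact: IH.
- exact: (mlin_prefix 1 (IH _ _ b2 b'' Hg')).
- by apply: mlinN; apply: IH; apply: mlin_prefix.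
Qed.

Lemma mlin_dia_wordl (M : lmodType k) (g : nw A -> M) v :
  mlin g -> mlin (fun u => feval g (dw u v)).
Proof.
move=> Hg; split=> [s c a b|a0 u w c a b]; rewrite /dia_word /=.
- by case: (mlin_diaw (size s + size v.2).+1 v.1 v.2 Hg) => H1 _; apply: H1.
- rewrite !size_cat /=.
  by case: (mlin_diaw (size u + (size w).+1 + size v.2).+1 v.1 v.2 Hg) => _; apply.
Qed.

Lemma mlin_dia_wordr (M : lmodType k) (g : nw A -> M) u :
  mlin g -> mlin (fun v => feval g (dw u v)).
Proof. by move=> /(mlin_dia_wordl u); apply: eq_mlin => v; rewrite dia_word_comm. Qed.

Definition meq (X Y : Sh) :=
  forall (M : lmodType k) (g : nw A -> M), mlin g -> feval g X = feval g Y.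

Lemma eqShE X Y : eqSh iota X Y <-> meq X Y.
Proof.
split=> H M g.
- move=> /multilin_nw_of_seq/(H M) E.
  by rewrite -!(eq_feval _ (fun w => congr1 g (nw_of_seqK w))).
- by move=> /mlin_wd; apply: H.
Qed.

#[global] Instance meq_equiv : Equivalence meq.
Proof. by split=> [x M g|x y E M g Hg|x y z E1 E2 M g Hg]; rewrite ?E ?E1 ?E2. Qed.

#[global] Instance feq_meq : subrelation feq meq.
Proof. by move=> X Y E M g _; apply: E. Qed.

#[global] Instance dia_meq : Proper (meq ==> meq ==> meq) (@dia k A).
Proof.
move=> X X' EX Y Y' EY M g Hg; rewrite !feval_dia EX; last first.
  by apply: mlin_feval => v; apply: mlin_dia_wordl.
by apply: eq_feval => u; apply: EY; apply: mlin_dia_wordr.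
Qed.

#[global] Instance Pr_meq : Proper (meq ==> meq) (@Pr k A).
Proof. by move=> X X' EX M g Hg; rewrite !feval_Pr EX //; apply: mlin_prefix. Qed.

End Multilinear.

Section TensorSquare.
Variables (k A : comPzRingType) (iota : {rmorphism k -> A}).
Local Notation Sh2 := (Sha2 k A).
Local Notation dw := (dia_word k).
Local Notation mlin := (mlin iota).

Definition mlin2 (M : lmodType k) (G : nw A * nw A -> M) :=
  (forall v, mlin (fun u => G (u, v))) /\ (forall u, mlin (fun v => G (u, v))).

Definition meq2 (X Y : Sh2) :=
  forall (M : lmodType k) (G : nw A * nw A -> M), mlin2 G -> feval G X = feval G Y.

Lemma eqSh2E X Y : eqSh2 iota X Y <-> meq2 X Y.
Proof.
split=> H M G.
- case=> H1 H2.
  have E Z : feval (fun p => G (nw_of_seq (wd p.1), nw_of_seq (wd p.2))) Z = feval G Z.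
    by apply: eq_feval => -[u v]; rewrite !nw_of_seqK.
  rewrite -!E; apply: (H M (fun u v => G (nw_of_seq u, nw_of_seq v))) => [v|u].
  + exact: (multilin_nw_of_seq (g := fun u => G (u, nw_of_seq v))).
  + exact: (multilin_nw_of_seq (g := fun v => G (nw_of_seq u, v))).
- move=> H1 H2; apply: (H M (fun p => G (wd p.1) (wd p.2))); split=> [v|u].
  + exact: (mlin_wd (f := G^~ (wd v))).
  + exact: (mlin_wd (f := G (wd u))).
Qed.

#[global] Instance meq2_equiv : Equivalence meq2.
Proof. by split=> [x M g|x y E M g Hg|x y z E1 E2 M g Hg]; rewrite ?E ?E1 ?E2. Qed.

#[global] Instance feq_meq2 : subrelation feq meq2.
Proof. by move=> X Y E M G _; apply: E. Qed.

Lemma mlin2_feval T (M : lmodType k) (H : nw A * nw A -> T -> M) (Y : fcomb k T) :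
  (forall t, mlin2 (H^~ t)) -> mlin2 (fun p => feval (H p) Y).
Proof.
move=> HH; split=> v.
- by apply: (mlin_feval (h := fun u => H (u, v))) => t; case: (HH t).
- by apply: (mlin_feval (h := fun u => H (v, u))) => t; case: (HH t).
Qed.

Lemma mlin2_idPr (M : lmodType k) (G : nw A * nw A -> M) :
  mlin2 G -> mlin2 (fun p => G (p.1, (1, wd p.2))).
Proof.
case=> H1 H2; split=> v; first exact: (H1 (1, wd v)).
exact: (mlin_prefix (g := fun w => G (v, w)) 1 (H2 v)).
Qed.

Definition bul_eval (M : lmodType k) (G : nw A * nw A -> M) (p q : nw A * nw A) :=
  feval (fun r => feval (fun s => G (r, s)) (dw p.2 q.2)) (dw p.1 q.1).

Lemma feval_bul (M : lmodType k) (G : nw A * nw A -> M) (X Y : Sh2) :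
  feval G (bul X Y) = feval (fun p => feval (bul_eval G p) Y) X.
Proof.
rewrite /bul feval_pairs; apply: eq_bigr => p _; rewrite scaler_sumr.
apply: eq_bigr => q _; rewrite feval_flatten big_map /bul_eval /feval scalerA scaler_sumr.
apply: eq_bigr => r _; rewrite big_map !scaler_sumr.
by apply: eq_bigr => s _; rewrite !scalerA.
Qed.

Lemma feval_idPr (M : lmodType k) (G : nw A * nw A -> M) (X : Sh2) :
  feval G (idPr X) = feval (fun p => G (p.1, (1, wd p.2))) X.
Proof. exact: feval_map. Qed.

Lemma feval_liftAA (M : lmodType k) (G : nw A * nw A -> M) (X : fcomb k (A * A)) :
  feval G (liftAA X) = feval (fun p => G ((p.1, [::]), (p.2, [::]))) X.
Proof. exact: feval_map. Qed.

Lemma bul_evalC (M : lmodType k) (G : nw A * nw A -> M) p q :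
  bul_eval G p q = bul_eval G q p.
Proof. by rewrite /bul_eval dia_word_comm; apply: eq_feval => r; rewrite dia_word_comm. Qed.

Lemma mlin2_bul_eval (M : lmodType k) (G : nw A * nw A -> M) q :
  mlin2 G -> mlin2 (bul_eval G ^~ q).
Proof.
case=> H1 H2; split=> v; rewrite /bul_eval /=.
- apply: (mlin_dia_wordl (g := fun r => feval (fun s => G (r, s)) (dw v q.2))).
  exact: mlin_feval.
- apply: (mlin_feval (h := fun u r => feval (fun s => G (r, s)) (dw u q.2))) => r.
  exact: mlin_dia_wordl.
Qed.

Lemma mlin2_bul_evalr (M : lmodType k) (G : nw A * nw A -> M) p :
  mlin2 G -> mlin2 (bul_eval G p).
Proof.
move=> /(mlin2_bul_eval p) [H1 H2].
by split=> v; [apply: eq_mlin (H1 v) | apply: eq_mlin (H2 v)] => w; rewrite bul_evalC.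
Qed.

#[global] Instance bul_meq2 : Proper (meq2 ==> meq2 ==> meq2) (@bul k A).
Proof.
move=> X X' EX Y Y' EY M G HG; rewrite !feval_bul EX; last first.
  by apply: mlin2_feval => q; apply: mlin2_bul_eval.
by apply: eq_feval => p; apply: EY; apply: mlin2_bul_evalr.
Qed.

#[global] Instance bul_feq : Proper (feq ==> feq ==> feq) (@bul k A).
Proof. by move=> X X' EX Y Y' EY M G; rewrite !feval_bul EX; apply: eq_feval => p; apply: EY. Qed.

#[global] Instance idPr_meq2 : Proper (meq2 ==> meq2) (@idPr k A).
Proof. by move=> X X' EX M G /mlin2_idPr HG; rewrite !feval_idPr EX. Qed.

#[global] Instance cat_meq2 : Proper (meq2 ==> meq2 ==> meq2) cat.
Proof. by move=> X X' EX Y Y' EY M G HG; rewrite !feval_cat EX // EY. Qed.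

#[global] Instance negc_meq2 : Proper (meq2 ==> meq2) (@negc k _).
Proof. by move=> X X' EX M G HG; rewrite !feval_negc EX. Qed.

Lemma bulC (X Y : Sh2) : feq (bul X Y) (bul Y X).
Proof.
move=> M G; rewrite !feval_bul feval_swap.
by apply: eq_feval => q; apply: eq_feval => p; rewrite bul_evalC.
Qed.

Lemma bul1 (Y : Sh2) : feq (bul (unit2 k A) Y) Y.
Proof.
have dia_word1 (M : lmodType k) (g : nw A -> M) v : feval g (dw (1, [::]) v) = g v.
  by case: v => [a [|x s]]; rewrite /= feval_single mul1r.
move=> M G; rewrite feval_bul feval_single.
by apply: eq_feval => -[u v]; rewrite /bul_eval /= !dia_word1.
Qed.

Lemma dia_wordA (u v w : nw A) (M : lmodType k) (g : nw A -> M) :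
  feval (fun t => feval g (dw t w)) (dw u v) = feval (fun s => feval g (dw u s)) (dw v w).
Proof.
move: (diaA (word k u) (word k v) (word k w) g).
rewrite feval_dia; under eq_feval do rewrite feval_word.
by rewrite feval_dia !feval_word feval_dia feval_word feval_dia !feval_word.
Qed.

Lemma bulA (X Y Z : Sh2) : feq (bul (bul X Y) Z) (bul X (bul Y Z)).
Proof.
move=> M G; rewrite !feval_bul; under [RHS]eq_feval do rewrite feval_bul.
apply: eq_feval => x; apply: eq_feval => y; rewrite /bul_eval.
under eq_feval do rewrite feval_swap.
rewrite feval_swap; apply: eq_feval => z /=.
under eq_feval do rewrite feval_swap.
under eq_feval => t do under eq_feval => a do rewrite (dia_wordA x.2 y.2 z.2 (fun s => G (a, s))).
rewrite (dia_wordA x.1 y.1 z.1).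
by apply: eq_feval => s; apply: feval_swap.
Qed.

Lemma idPr_Nijenhuis (X Y : Sh2) : feq (bul (idPr X) (idPr Y))
  (idPr (bul (idPr X) Y ++ bul X (idPr Y) ++ negc (idPr (bul X Y)))).
Proof.
move=> M G; rewrite feval_bul feval_idPr feval_idPr !feval_cat feval_negc.
rewrite (feval_idPr _ (bul X Y)) !feval_bul (feval_idPr _ X).
rewrite -feval_opp -!feval_add; apply: eq_feval => x.
rewrite !feval_idPr -feval_opp -!feval_add; apply: eq_feval => y.
rewrite /bul_eval /= -feval_opp -!feval_add; apply: eq_feval => r.
rewrite (dia_word_prefix _ 1 1) feval_prefix !feval_cat feval_negc feval_Pr mulr1.
by rewrite addrCA.
Qed.

Lemma liftAA_eqAA (x y : fcomb k (A * A)) : eqAA iota x y -> meq2 (liftAA x) (liftAA y).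
Proof.
move=> H M G [H1 H2]; rewrite !feval_liftAA.
apply: (H M (fun a b => G ((a, [::]), (b, [::])))) => [b|a].
- exact: (H1 (b, [::])).1.
- exact: (H2 (a, [::])).1.
Qed.

Lemma liftAA_mul (X Y : fcomb k (A * A)) : feq (liftAA (mulAA X Y)) (bul (liftAA X) (liftAA Y)).
Proof.
move=> M G; rewrite feval_liftAA feval_bul feval_liftAA /feval big_allpairs_dep /=.
apply: eq_bigr => p _; rewrite -/(feval _ _) feval_liftAA scaler_sumr; apply: eq_bigr => q _.
by rewrite /bul_eval /= !feval_single scalerA.
Qed.

End TensorSquare.

Section Coproduct.
Variables (k A : comPzRingType) (iota : {rmorphism k -> A}) (DA : A -> fcomb k (A * A)).
Hypothesis DA_lin : forall c a b, eqAA iota (DA (iota c * a + b)) (scalec c (DA a) ++ DA b).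
Hypothesis DA_1 : eqAA iota (DA 1) [:: (1, (1, 1))].
Local Notation Sh := (Sha k A).
Local Notation Sh2 := (Sha2 k A).
Local Notation mlin := (mlin iota).
Local Notation mlin2 := (mlin2 iota).
Local Notation meq2 := (meq2 iota).
Local Notation DT := (DT DA).
Local Notation DTl := (DTl DA).

Lemma feval_DT (M : lmodType k) (G : nw A * nw A -> M) (X : Sh) :
  feval G (DT X) = feval (fun w => feval G (DTl w.1 w.2)) X.
Proof. exact: (feval_bind G (fun w => DTl w.1 w.2)). Qed.

(* The special case [a == 1] in the definition of [DTl] is an instance of the
   general rule, because Delta_A(1) = 1 (x) 1. *)
Lemma DTl_cons a x s : meq2 (DTl a (x :: s)) (bul (liftAA (DA a)) (idPr (DTl x s))).
Proof.
rewrite /=; case: eqP => [->|_]; last reflexivity.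
by rewrite (liftAA_eqAA DA_1) (bul1 (idPr _)).
Qed.

Lemma lin1_liftAA_DA (M : lmodType k) (G : nw A * nw A -> M) :
  mlin2 G -> lin1 iota (fun a => feval G (liftAA (DA a))).
Proof.
move=> HG c a b /=.
by rewrite (liftAA_eqAA (DA_lin c a b) HG) feval_liftAA feval_cat feval_scalec !feval_liftAA.
Qed.

Lemma feval_bul_idPr (M : lmodType k) (G : nw A * nw A -> M) (Z W : Sh2) :
  feval G (bul Z (idPr W)) = feval (fun q => feval (bul_eval G ^~ (q.1, (1, wd q.2))) Z) W.
Proof. by rewrite feval_bul feval_swap feval_idPr. Qed.

Lemma feval_DTl_cons (M : lmodType k) (G : nw A * nw A -> M) a x s : mlin2 G ->
  feval G (DTl a (x :: s)) =
  feval (fun q => feval (bul_eval G ^~ (q.1, (1, wd q.2))) (liftAA (DA a))) (DTl x s).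
Proof. by move=> HG; rewrite (DTl_cons _ _ _ HG) feval_bul_idPr. Qed.

Lemma mlin2_DTl_cons_eval (M : lmodType k) (G : nw A * nw A -> M) a : mlin2 G ->
  mlin2 (fun q => feval (bul_eval G ^~ (q.1, (1, wd q.2))) (liftAA (DA a))).
Proof.
move=> HG; apply: (mlin2_feval (H := fun q p => bul_eval G p (q.1, (1, wd q.2)))) => p.
exact/(mlin2_idPr (G := bul_eval G p))/mlin2_bul_evalr.
Qed.

Lemma lin1_DTl (M : lmodType k) (G : nw A * nw A -> M) s :
  mlin2 G -> lin1 iota (fun a => feval G (DTl a s)).
Proof.
case: s => [|y s] HG; first exact: lin1_liftAA_DA.
move=> c a b; rewrite !(DTl_cons _ _ _ HG) !feval_bul.
apply: (lin1_liftAA_DA (G := fun p => feval (bul_eval G p) (idPr (DTl y s)))).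
by apply: mlin2_feval => q; apply: mlin2_bul_eval.
Qed.

Lemma mlin_DTl (M : lmodType k) (G : nw A * nw A -> M) :
  mlin2 G -> mlin (fun w => feval G (DTl w.1 w.2)).
Proof.
move=> HG; split=> [s|a0 u]; first exact: lin1_DTl.
elim: u M G HG a0 => [|u0 u IH] M G HG a0 v c a b /=; rewrite !feval_DTl_cons //.
- exact/lin1_DTl/mlin2_DTl_cons_eval.
- exact/IH/mlin2_DTl_cons_eval.
Qed.

#[global] Instance DT_meq : Proper (meq iota ==> meq2) DT.
Proof. by move=> X Y E M G HG; rewrite !feval_DT E //; apply: mlin_DTl. Qed.

#[global] Instance DT_feq : Proper (feq ==> feq) DT.
Proof. by move=> X Y E M G; rewrite !feval_DT E. Qed.

Lemma DT_cat (X Y : Sh) : DT (X ++ Y) = DT X ++ DT Y.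
Proof. by rewrite /Defs.DT map_cat flatten_cat. Qed.

Lemma DT_negc (X : Sh) : feq (DT (negc X)) (negc (DT X)).
Proof. by move=> M G; rewrite feval_DT !feval_negc feval_DT. Qed.

Lemma DT_letter a : feq (DT (letter k a)) (liftAA (DA a)).
Proof. by move=> M G; rewrite feval_DT feval_word. Qed.

Lemma DT_Pr (X : Sh) : feq (DT (Pr X)) (idPr (DT X)).
Proof.
move=> M G; rewrite feval_DT feval_Pr feval_idPr feval_DT.
by apply: eq_feval => w; rewrite /= eqxx feval_idPr.
Qed.

Lemma DT_prefix a (X : Sh) : meq2 (DT (Defs.prefix a X)) (bul (liftAA (DA a)) (idPr (DT X))).
Proof.
move=> M G HG; rewrite feval_DT feval_prefix feval_bul_idPr feval_DT.
by apply: eq_feval => w; rewrite feval_DTl_cons.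
Qed.

End Coproduct.

Section CoproductMultiplicative.
Variables (k A : comPzRingType) (iota : {rmorphism k -> A}) (DA : A -> fcomb k (A * A)).
Hypothesis DA_1 : eqAA iota (DA 1) [:: (1, (1, 1))].
Hypothesis DA_mul : forall a b, eqAA iota (DA (a * b)) (mulAA (DA a) (DA b)).
Local Notation Sh := (Sha k A).
Local Notation mlin2 := (mlin2 iota).
Local Notation meq2 := (meq2 iota).
Local Notation DT := (DT DA).
Local Notation DTl := (DTl DA).

Lemma liftAA_DA_mul a b : meq2 (liftAA (DA (a * b))) (bul (liftAA (DA a)) (liftAA (DA b))).
Proof. by rewrite (liftAA_eqAA (DA_mul a b)) liftAA_mul. Qed.

Lemma bulACA (X Y Z W : Sha2 k A) : feq (bul (bul X Y) (bul Z W)) (bul (bul X Z) (bul Y W)).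
Proof. by rewrite bulA (bulC Z) -(bulA Y) (bulC (bul Y W)) -bulA. Qed.

Definition DT_mul_at (X Y : Sh) := meq2 (DT (dia X Y)) (bul (DT X) (DT Y)).

Lemma DT_mul_at_words (X Y : Sh) :
  (forall u v, DT_mul_at (word k u) (word k v)) -> DT_mul_at X Y.
Proof.
move=> H M G HG.
have -> : feval G (DT (dia X Y)) =
    feval (fun u => feval (fun v => feval G (DT (dia (word k u) (word k v)))) Y) X.
  rewrite feval_DT feval_dia; apply: eq_feval => u; apply: eq_feval => v.
  by rewrite feval_DT feval_dia !feval_word.
have -> : feval G (bul (DT X) (DT Y)) =
    feval (fun u => feval (fun v => feval G (bul (DT (word k u)) (DT (word k v)))) Y) X.
  rewrite feval_bul (feval_DT _ _ X); apply: eq_feval => u.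
  rewrite feval_swap (feval_DT _ _ Y); apply: eq_feval => v.
  rewrite feval_bul (feval_DT _ _ (word k u)) feval_word feval_swap.
  by apply: eq_feval => p; rewrite feval_DT feval_word.
by apply: eq_feval => u; apply: eq_feval => v; apply: H.
Qed.

Lemma DT_mul_at_prefix a b (X Y : Sh) :
  DT_mul_at X (Pr Y) -> DT_mul_at (Pr X) Y -> DT_mul_at X Y ->
  DT_mul_at (Defs.prefix a X) (Defs.prefix b Y).
Proof.
rewrite /DT_mul_at => h1 h2 h3.
rewrite dia_prefix !(DT_prefix DA_1) /dia_tail !DT_cat DT_negc DT_Pr h1 h2 h3 !DT_Pr.
by rewrite catCA -idPr_Nijenhuis liftAA_DA_mul bulACA.
Qed.

Lemma DT_mul_at_words_size n (u v : nw A) :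
  (size u.2 + size v.2 < n)%N -> DT_mul_at (word k u) (word k v).
Proof.
elim: n u v => // n IH [a [|x s]] [b [|y t]] /= Hn; rewrite -?prefix_word /DT_mul_at.
- by rewrite (dia_letters a) !DT_letter liftAA_DA_mul.
- by rewrite (dia_letter_prefix a) !(DT_prefix DA_1) DT_letter liftAA_DA_mul bulA.
- rewrite (dia_prefix_letter a) !(DT_prefix DA_1) DT_letter liftAA_DA_mul bulA.
  by rewrite (bulC (liftAA (DA b))) bulA.
- by apply: DT_mul_at_prefix; rewrite -?Pr_word; apply: IH => /=; lia.
Qed.

Lemma DT_dia (X Y : Sh) : meq2 (DT (dia X Y)) (bul (DT X) (DT Y)).
Proof.
apply: DT_mul_at_words => u v.
exact: (@DT_mul_at_words_size (size u.2 + size v.2).+1).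
Qed.

Lemma DT_dia_word (M : lmodType k) (G : nw A * nw A -> M) (u v : nw A) : mlin2 G ->
  feval G (DT (dia_word k u v)) =
  feval (fun p => feval (bul_eval G p) (DTl v.1 v.2)) (DTl u.1 u.2).
Proof.
move=> HG; have := DT_dia (word k u) (word k v) HG.
rewrite feval_DT feval_dia !feval_word feval_bul (feval_DT _ _ (word k u)) feval_word.
rewrite (feval_DT _ _ (dia_word k u v)) => ->; apply: eq_feval => p.
by rewrite feval_DT feval_word.
Qed.

End CoproductMultiplicative.

Section Counit.
Variables (k A : comPzRingType) (iota : {rmorphism k -> A}) (eA : A -> k).
Hypothesis eA_lin : forall c a b, eA (iota c * a + b) = c * eA a + eA b.
Hypothesis eA_mul : forall a b, eA (a * b) = eA a * eA b.
Hypothesis eA_1 : eA 1 = 1.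
Local Notation Sh := (Sha k A).
Local Notation eTw := (eTw eA).

Let scale_regular (c x : k) : c *: (x : k^o) = c * x. Proof. by []. Qed.

Lemma eT_feval (X : Sh) : eT eA X = feval (M := k^o) eTw X.
Proof. by []. Qed.

Lemma eTw_cons a (w : nw A) : eTw (a, wd w) = eA a * eTw w.
Proof. by rewrite /Defs.eTw /= big_cons. Qed.

Lemma mlin_eTw : mlin iota (M := k^o) eTw.
Proof.
split=> [s c a b|a0 u v c a b]; rewrite /Defs.eTw /=.
- by rewrite eA_lin scale_regular mulrDl mulrA.
- by rewrite !big_cat !big_cons /= eA_lin scale_regular; ring.
Qed.

Lemma feval_eTw_prefix c (X : Sh) :
  feval (M := k^o) eTw (Defs.prefix c X) = eA c * feval (M := k^o) eTw X.
Proof.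
rewrite feval_prefix /feval mulr_sumr; apply: eq_bigr => p _.
by rewrite eTw_cons !scale_regular; ring.
Qed.

Lemma feval_eTw_diaw n (a1 b1 : A) a' b' : (size a' + size b' < n)%N ->
  feval (M := k^o) eTw (diaw k n a1 a' b1 b') = eTw (a1, a') * eTw (b1, b').
Proof.
elim: n a1 a' b1 b' => // n IH a1 [|a2 a''] b1 [|b2 b''] Hn;
  try by rewrite /= feval_single /Defs.eTw /= !big_nil eA_mul; ring.
have -> : diaw k n.+1 a1 (a2 :: a'') b1 (b2 :: b'') = Defs.prefix (a1 * b1)
  (diaw k n a2 a'' 1 (b2 :: b'') ++ diaw k n 1 (a2 :: a'') b2 b''
   ++ negc (Defs.prefix 1 (diaw k n a2 a'' b2 b''))) by [].
move: Hn => /= Hn.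
rewrite feval_eTw_prefix !feval_cat feval_negc feval_eTw_prefix !IH /=; try lia.
by rewrite /Defs.eTw /= !big_cons eA_mul eA_1; ring.
Qed.

Lemma feval_eTw_dia_word (u v : nw A) : feval (M := k^o) eTw (dia_word k u v) = eTw u * eTw v.
Proof. by rewrite feval_eTw_diaw // -!surjective_pairing. Qed.

Lemma eT_meq (X Y : Sh) : meq iota X Y -> eT eA X = eT eA Y.
Proof. by move=> E; rewrite !eT_feval; apply: (E k^o _ mlin_eTw). Qed.

Lemma eT_dia (X Y : Sh) : eT eA (dia X Y) = eT eA X * eT eA Y.
Proof.
rewrite !eT_feval feval_dia.
under eq_feval => u do under eq_feval => v do rewrite feval_eTw_dia_word.
rewrite /feval mulr_suml; apply: eq_bigr => p _.
rewrite scale_regular mulr_sumr mulr_sumr; apply: eq_bigr => q _.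
by rewrite !scale_regular; ring.
Qed.

Lemma eT_muT : eT eA (muT A 1) = 1.
Proof. by rewrite /eT /muT /Defs.eTw /= big_cons !big_nil eA_1 !mulr1 addr0. Qed.

End Counit.

Section LeftCounicity.
Variables (k A : comPzRingType) (iota : {rmorphism k -> A}).
Variables (DA : A -> fcomb k (A * A)) (eA : A -> k).
Hypothesis DA_1 : eqAA iota (DA 1) [:: (1, (1, 1))].
Hypothesis eA_lin : forall c a b, eA (iota c * a + b) = c * eA a + eA b.
Hypothesis eA_mul : forall a b, eA (a * b) = eA a * eA b.
Hypothesis eA_1 : eA 1 = 1.
Hypothesis DA_counit : forall a, \sum_(p <- DA a) iota (p.1 * eA p.2.1) * p.2.2 = a.
Local Notation Sh2 := (Sha2 k A).
Local Notation meq := (meq iota).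
Local Notation eT_id := (eT_id eA).

Lemma feval_eT_id (M : lmodType k) (g : nw A -> M) (Y : Sh2) :
  feval g (eT_id Y) = feval (fun p => eTw eA p.1 *: g p.2) Y.
Proof. by rewrite /feval big_map; apply: eq_bigr => p _; rewrite scalerA. Qed.

#[global] Instance eT_id_meq : Proper (meq2 iota ==> meq) eT_id.
Proof.
move=> X Y E M g Hg; rewrite !feval_eT_id; apply: E; split=> v; last exact: (mlinZ (eTw eA v) Hg).
have [H1 H2] := mlin_eTw eA_lin.
by split=> [s c a b|a0 u w c a b] /=; rewrite ?H1 ?H2 scalerDl scalerA.
Qed.

Lemma eT_id_bul (Y Z : Sh2) : feq (eT_id (bul Y Z)) (dia (eT_id Y) (eT_id Z)).
Proof.
move=> M g; rewrite feval_eT_id feval_bul feval_dia feval_eT_id.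
apply: eq_feval => p; rewrite feval_eT_id -feval_scale; apply: eq_feval => q.
rewrite /bul_eval feval_swap /=.
under eq_feval => v do rewrite feval_scalel feval_eTw_dia_word //.
by rewrite feval_scale scalerA.
Qed.

Lemma eT_id_idPr (Y : Sh2) : eT_id (idPr Y) = Pr (eT_id Y).
Proof. by rewrite /Defs.eT_id /idPr /Pr -!map_comp. Qed.

Lemma eT_id_liftAA_DA a : meq (eT_id (liftAA (DA a))) (letter k a).
Proof.
move=> M g [H1 _]; rewrite feval_eT_id feval_liftAA feval_word -{2}(DA_counit a).
rewrite (lin1_sum _ (fun p => p.1 * eA p.2.1) (H1 [::])) /feval.
by apply: eq_bigr => p _; rewrite /Defs.eTw /= big_nil mulr1 scalerA.
Qed.

Lemma eT_id_DT_word (w : nw A) : meq (eT_id (DT DA (word k w))) (word k w).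
Proof.
case: w => a s; elim: s a => [|x s IH] a; first by rewrite DT_letter eT_id_liftAA_DA.
rewrite -prefix_word (DT_prefix DA_1) eT_id_bul eT_id_idPr IH eT_id_liftAA_DA.
by rewrite PrE (dia_letter_prefix a) mulr1.
Qed.

Lemma eT_id_DT (X : Sha k A) : meq (eT_id (DT DA X)) X.
Proof.
move=> M g Hg; rewrite feval_eT_id feval_DT; apply: eq_feval => w.
by have := eT_id_DT_word w Hg; rewrite feval_eT_id feval_DT !feval_word.
Qed.

End LeftCounicity.

Section TensorCube.
Variables (k A : comPzRingType) (iota : {rmorphism k -> A}).
Local Notation Sh := (Sha k A).
Local Notation Sh3 := (Sha3 k A).
Local Notation T3 := (nw A * nw A * nw A)%type.
Local Notation dw := (dia_word k).
Local Notation mlin := (mlin iota).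

Definition mlin3 (M : lmodType k) (G : T3 -> M) :=
  [/\ forall v w, mlin (fun u => G (u, v, w)),
      forall u w, mlin (fun v => G (u, v, w)) &
      forall u v, mlin (fun w => G (u, v, w))].

Definition meq3 (X Y : Sh3) :=
  forall (M : lmodType k) (G : T3 -> M), mlin3 G -> feval G X = feval G Y.

Lemma eqSh3E X Y : eqSh3 iota X Y <-> meq3 X Y.
Proof.
split=> H M G.
- case=> H1 H2 H3.
  set nw3 := fun p : T3 => (nw_of_seq (wd p.1.1), nw_of_seq (wd p.1.2), nw_of_seq (wd p.2)).
  have E Z : feval (G \o nw3) Z = feval G Z.
    by apply: eq_feval => -[[u v] w]; rewrite /nw3 /= !nw_of_seqK.
  rewrite -!E; apply: (H M (fun u v w => G (nw_of_seq u, nw_of_seq v, nw_of_seq w))).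
  + by move=> v w; apply: (multilin_nw_of_seq (g := fun u => G (u, _, _))).
  + by move=> u w; apply: (multilin_nw_of_seq (g := fun v => G (_, v, _))).
  + by move=> u v; apply: (multilin_nw_of_seq (g := fun w => G (_, _, w))).
- move=> H1 H2 H3; apply: (H M (fun p => G (wd p.1.1) (wd p.1.2) (wd p.2))); split.
  + by move=> v w; apply: (mlin_wd (f := fun u => G u (wd v) (wd w))).
  + by move=> u w; apply: (mlin_wd (f := fun v => G (wd u) v (wd w))).
  + by move=> u v; apply: (mlin_wd (f := fun w => G (wd u) (wd v) w)).
Qed.

#[global] Instance meq3_equiv : Equivalence meq3.
Proof. by split=> [x M g|x y E M g Hg|x y z E1 E2 M g Hg]; rewrite ?E ?E1 ?E2. Qed.

#[global] Instance feq_meq3 : subrelation feq meq3.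
Proof. by move=> X Y E M G _; apply: E. Qed.

Lemma mlin3_feval T (M : lmodType k) (H : T3 -> T -> M) (Y : fcomb k T) :
  (forall t, mlin3 (H^~ t)) -> mlin3 (fun p => feval (H p) Y).
Proof.
move=> HH; split=> u v.
- by apply: (mlin_feval (h := fun w => H (w, u, v))) => t; case: (HH t).
- by apply: (mlin_feval (h := fun w => H (u, w, v))) => t; case: (HH t).
- by apply: (mlin_feval (h := fun w => H (u, v, w))) => t; case: (HH t).
Qed.

Definition tens3 (U V W : Sh) : Sh3 := flatten
  [seq flatten [seq [seq (r.1 * s.1 * t.1, (r.2, s.2, t.2)) | t <- W] | s <- V] | r <- U].

Definition bul3 (X Y : Sh3) : Sh3 := flatten [seq scalec (p.1 * q.1)
  (tens3 (dw p.2.1.1 q.2.1.1) (dw p.2.1.2 q.2.1.2) (dw p.2.2 q.2.2)) | p <- X, q <- Y].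

Definition idPr3 (Y : Sh3) : Sh3 := [seq (p.1, (p.2.1, (1, wd p.2.2))) | p <- Y].

Definition bul3_eval (M : lmodType k) (G : T3 -> M) (p q : T3) :=
  feval (fun r => feval (fun s => feval (fun t => G (r, s, t))
    (dw p.2 q.2)) (dw p.1.2 q.1.2)) (dw p.1.1 q.1.1).

Lemma feval_bul3 (M : lmodType k) (G : T3 -> M) (X Y : Sh3) :
  feval G (bul3 X Y) = feval (fun p => feval (bul3_eval G p) Y) X.
Proof.
rewrite /bul3 feval_pairs; apply: eq_bigr => p _; rewrite scaler_sumr.
apply: eq_bigr => q _; rewrite feval_scalec scalerA; congr (_ *: _).
rewrite /tens3 /bul3_eval !(feval_flatten, big_map); apply: eq_bigr => r _.
rewrite -/(feval _ _) !(feval_flatten, big_map) scaler_sumr; apply: eq_bigr => s _.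
by rewrite /feval big_map !scaler_sumr; apply: eq_bigr => t _; rewrite !scalerA.
Qed.

Lemma feval_idPr3 (M : lmodType k) (G : T3 -> M) (Y : Sh3) :
  feval G (idPr3 Y) = feval (fun p => G (p.1, (1, wd p.2))) Y.
Proof. exact: feval_map. Qed.

Lemma bul3_evalC (M : lmodType k) (G : T3 -> M) p q : bul3_eval G p q = bul3_eval G q p.
Proof.
rewrite /bul3_eval dia_word_comm; apply: eq_feval => r.
by rewrite dia_word_comm; apply: eq_feval => s; rewrite dia_word_comm.
Qed.

Lemma mlin3_bul3_eval (M : lmodType k) (G : T3 -> M) q : mlin3 G -> mlin3 (bul3_eval G ^~ q).
Proof.
case=> H1 H2 H3; split=> u v; rewrite /bul3_eval /=.
- apply: (mlin_dia_wordl (g := fun r => feval (fun s => feval (fun t => G (r, s, t)) _) _)).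
  by apply: mlin_feval => s; apply: mlin_feval => t; apply: H1.
- apply: mlin_feval => r.
  apply: (mlin_dia_wordl (g := fun s => feval (fun t => G (r, s, t)) _)).
  by apply: mlin_feval => t; apply: H2.
- apply: mlin_feval => r; apply: mlin_feval => s.
  exact: (mlin_dia_wordl (g := fun t => G (r, s, t))).
Qed.

Lemma mlin3_bul3_evalr (M : lmodType k) (G : T3 -> M) p : mlin3 G -> mlin3 (bul3_eval G p).
Proof.
move=> /(mlin3_bul3_eval p) [H1 H2 H3].
by split=> u v; [apply: eq_mlin (H1 u v) | apply: eq_mlin (H2 u v) | apply: eq_mlin (H3 u v)]
  => w; rewrite bul3_evalC.
Qed.

#[global] Instance bul3_meq3 : Proper (meq3 ==> meq3 ==> meq3) bul3.
Proof.
move=> X X' EX Y Y' EY M G HG; rewrite !feval_bul3 EX; last first.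
  by apply: mlin3_feval => q; apply: mlin3_bul3_eval.
by apply: eq_feval => p; apply: EY; apply: mlin3_bul3_evalr.
Qed.

#[global] Instance idPr3_meq3 : Proper (meq3 ==> meq3) idPr3.
Proof.
move=> X X' EX M G [H1 H2 H3]; rewrite !feval_idPr3 EX //; split=> u v.
- exact: (H1 u (1, wd v)).
- exact: (H2 u (1, wd v)).
- exact: (mlin_prefix (g := fun w => G (u, v, w)) 1 (H3 u v)).
Qed.

End TensorCube.

Section Coassociativity.
Variables (k A : comPzRingType) (iota : {rmorphism k -> A}) (DA : A -> fcomb k (A * A)).
Hypothesis DA_lin : forall c a b, eqAA iota (DA (iota c * a + b)) (scalec c (DA a) ++ DA b).
Hypothesis DA_1 : eqAA iota (DA 1) [:: (1, (1, 1))].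
Hypothesis DA_mul : forall a b, eqAA iota (DA (a * b)) (mulAA (DA a) (DA b)).
Hypothesis DA_coassoc : forall a, eqAAA iota
  (flatten [seq [seq (p.1 * q.1, (q.2.1, q.2.2, p.2.2)) | q <- DA p.2.1] | p <- DA a])
  (flatten [seq [seq (p.1 * q.1, (p.2.1, q.2.1, q.2.2)) | q <- DA p.2.2] | p <- DA a]).
Local Notation Sh2 := (Sha2 k A).
Local Notation T3 := (nw A * nw A * nw A)%type.
Local Notation mlin2 := (mlin2 iota).
Local Notation meq3 := (meq3 iota).
Local Notation DTl := (DTl DA).
Local Notation DT_id := (DT_id DA).
Local Notation id_DT := (id_DT DA).

Lemma feval_DT_id (M : lmodType k) (G : T3 -> M) (Y : Sh2) :
  feval G (DT_id Y) = feval (fun p => feval (fun q => G (q.1, q.2, p.2)) (DTl p.1.1 p.1.2)) Y.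
Proof.
rewrite feval_flatten big_map /feval; apply: eq_bigr => p _.
by rewrite big_map scaler_sumr; apply: eq_bigr => q _; rewrite scalerA.
Qed.

Lemma feval_id_DT (M : lmodType k) (G : T3 -> M) (Y : Sh2) :
  feval G (id_DT Y) = feval (fun p => feval (fun q => G (p.1, q.1, q.2)) (DTl p.2.1 p.2.2)) Y.
Proof.
rewrite feval_flatten big_map /feval; apply: eq_bigr => p _.
by rewrite big_map scaler_sumr; apply: eq_bigr => q _; rewrite scalerA.
Qed.

#[global] Instance DT_id_meq : Proper (meq2 iota ==> meq3) DT_id.
Proof.
move=> X Y E M G [H1 H2 H3]; rewrite !feval_DT_id; apply: E; split=> v /=.
- apply: (mlin_DTl DA_lin DA_1 (G := fun q => G (q.1, q.2, v))).
  by split=> w; [apply: H1 | apply: H2].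
- by apply: (mlin_feval (h := fun w q => G (q.1, q.2, w))) => /= q; apply: H3.
Qed.

#[global] Instance id_DT_meq : Proper (meq2 iota ==> meq3) id_DT.
Proof.
move=> X Y E M G [H1 H2 H3]; rewrite !feval_id_DT; apply: E; split=> v /=.
- by apply: (mlin_feval (h := fun w q => G (w, q.1, q.2))) => /= q; apply: H1.
- apply: (mlin_DTl DA_lin DA_1 (G := fun q => G (v, q.1, q.2))).
  by split=> w; [apply: H2 | apply: H3].
Qed.

Lemma DT_id_idPr (Y : Sh2) : feq (DT_id (idPr Y)) (idPr3 (DT_id Y)).
Proof. by move=> M G; rewrite feval_DT_id feval_idPr feval_idPr3 feval_DT_id. Qed.

Lemma id_DT_idPr (Y : Sh2) : feq (id_DT (idPr Y)) (idPr3 (id_DT Y)).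
Proof.
move=> M G; rewrite feval_id_DT feval_idPr feval_idPr3 feval_id_DT.
by apply: eq_feval => p; rewrite /= eqxx feval_idPr.
Qed.

Lemma DT_id_bul (P Q : Sh2) : meq3 (DT_id (bul P Q)) (bul3 (DT_id P) (DT_id Q)).
Proof.
move=> M G [H1 H2 H3].
have HG s : mlin2 (fun q => G (q.1, q.2, s)) by split=> w; [apply: H1 | apply: H2].
rewrite feval_DT_id feval_bul feval_bul3 feval_DT_id; apply: eq_feval => x.
under [RHS]eq_feval => a do rewrite feval_DT_id.
rewrite feval_swap; apply: eq_feval => y.
rewrite /bul_eval /= feval_swap.
under eq_feval => s do
  rewrite -(feval_DT _ (fun q => G (q.1, q.2, s))) (DT_dia_word DA_1 DA_mul _ _ (HG s)).
rewrite feval_swap; apply: eq_feval => a.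
rewrite feval_swap; apply: eq_feval => b.
by rewrite /bul3_eval /bul_eval /= feval_swap; apply: eq_feval => r; rewrite feval_swap.
Qed.

Lemma id_DT_bul (P Q : Sh2) : meq3 (id_DT (bul P Q)) (bul3 (id_DT P) (id_DT Q)).
Proof.
move=> M G [H1 H2 H3].
have HG r : mlin2 (fun q => G (r, q.1, q.2)) by split=> w; [apply: H2 | apply: H3].
rewrite feval_id_DT feval_bul feval_bul3 feval_id_DT; apply: eq_feval => x.
under [RHS]eq_feval => a do rewrite feval_id_DT.
rewrite feval_swap; apply: eq_feval => y.
rewrite /bul_eval /=.
under eq_feval => r do
  rewrite -(feval_DT _ (fun q => G (r, q.1, q.2))) (DT_dia_word DA_1 DA_mul _ _ (HG r)).
rewrite feval_swap; apply: eq_feval => a.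
by rewrite feval_swap; apply: eq_feval => b.
Qed.

Lemma DT_coassoc_letter a : meq3 (DT_id (liftAA (DA a))) (id_DT (liftAA (DA a))).
Proof.
move=> M G [H1 H2 H3]; set G' := fun x y z => G ((x, [::]), (y, [::]), (z, [::])).
have -> : feval G (DT_id (liftAA (DA a))) = feval (fun p => G' p.1.1 p.1.2 p.2)
    (flatten [seq [seq (p.1 * q.1, (q.2.1, q.2.2, p.2.2)) | q <- DA p.2.1] | p <- DA a]).
  rewrite feval_DT_id feval_liftAA feval_flatten big_map /feval; apply: eq_bigr => p _ /=.
  by rewrite !big_map scaler_sumr; apply: eq_bigr => q _; rewrite scalerA.
have -> : feval G (id_DT (liftAA (DA a))) = feval (fun p => G' p.1.1 p.1.2 p.2)
    (flatten [seq [seq (p.1 * q.1, (p.2.1, q.2.1, q.2.2)) | q <- DA p.2.2] | p <- DA a]).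
  rewrite feval_id_DT feval_liftAA feval_flatten big_map /feval; apply: eq_bigr => p _ /=.
  by rewrite !big_map scaler_sumr; apply: eq_bigr => q _; rewrite scalerA.
apply: DA_coassoc => [b d|a' d|a' b].
- exact: (H1 (b, [::]) (d, [::])).1.
- exact: (H2 (a', [::]) (d, [::])).1.
- exact: (H3 (a', [::]) (b, [::])).1.
Qed.

Lemma DT_coassoc_word (w : nw A) : meq3 (DT_id (DT DA (word k w))) (id_DT (DT DA (word k w))).
Proof.
case: w => a s; elim: s a => [|x s IH] a; first by rewrite DT_letter DT_coassoc_letter.
rewrite -prefix_word (DT_prefix DA_1) DT_id_bul id_DT_bul DT_id_idPr id_DT_idPr.
by rewrite IH DT_coassoc_letter.
Qed.

Lemma DT_coassoc (X : Sha k A) : meq3 (DT_id (DT DA X)) (id_DT (DT DA X)).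
Proof.
move=> M G HG; rewrite feval_DT_id feval_id_DT !feval_DT; apply: eq_feval => w.
by have := DT_coassoc_word w HG; rewrite feval_DT_id feval_id_DT !feval_DT !feval_word.
Qed.

End Coassociativity.

Theorem theorem3p8 (k A : comPzRingType) (iota : {rmorphism k -> A})
    (DA : A -> fcomb k (A * A)) (eA : A -> k) :
  left_counital_bialgebra iota DA eA ->
  ((forall x x' y y', eqSh iota x x' -> eqSh iota y y' ->
        eqSh iota (dia x y) (dia x' y'))
   /\ (forall x y z, eqSh iota (dia (dia x y) z) (dia x (dia y z)))
   /\ (forall x y, eqSh iota (dia x y) (dia y x))
   /\ (forall (c : k) x, eqSh iota (dia (muT A c) x) (scalec c x)))
  /\ ((forall x x', eqSh iota x x' -> eqSh iota (Pr x) (Pr x'))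
   /\ (forall x y, eqSh iota (dia (Pr x) (Pr y))
         (Pr (dia (Pr x) y) ++ Pr (dia x (Pr y)) ++ negc (Pr (Pr (dia x y))))))
  /\ ((forall x x', eqSh iota x x' -> eqSh2 iota (DT DA x) (DT DA x'))
   /\ (forall x y, eqSh2 iota (DT DA (dia x y)) (bul (DT DA x) (DT DA y)))
   /\ eqSh2 iota (DT DA (muT A 1)) (unit2 k A))
  /\ ((forall x x', eqSh iota x x' -> eT eA x = eT eA x')
   /\ (forall x y, eT eA (dia x y) = eT eA x * eT eA y)
   /\ eT eA (muT A 1) = 1)
  /\ (forall x, eqSh3 iota (DT_id DA (DT DA x)) (id_DT DA (DT DA x)))
  /\ (forall x, eqSh iota (eT_id eA (DT DA x)) x)
  /\ (forall x, eqSh2 iota (DT DA (Pr x)) (idPr (DT DA x))).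
Proof.
case=> DA_lin [DA_mul DA_1] DA_coassoc [eA_lin [eA_mul eA_1]] DA_counit.
split; [|split; [|split; [|split; [|split; [|split]]]]].
- split; [|split; [|split]] => [x x' y y' /eqShE Ex /eqShE Ey|x y z|x y|c x]; apply/eqShE.
  + by rewrite Ex Ey.
  + by rewrite diaA.
  + by rewrite diaC.
  + by rewrite dia_unit.
- split=> [x x' /eqShE Ex|x y]; apply/eqShE; first by rewrite Ex.
  by rewrite Pr_Nijenhuis /dia_tail !Pr_cat Pr_negc catCA.
- split; [|split] => [x x' /eqShE Ex|x y|]; apply/eqSh2E.
  + by rewrite (DT_meq DA_lin DA_1 Ex).
  + exact: DT_dia.
  + by rewrite (DT_letter DA 1) (liftAA_eqAA DA_1).
- split; [|split] => [x x' /eqShE|x y|]; [exact: eT_meq | exact: eT_dia | exact: eT_muT].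
- by move=> x; apply/eqSh3E; apply: DT_coassoc.
- by move=> x; apply/eqShE; apply: eT_id_DT.
- by move=> x; apply/eqSh2E; rewrite DT_Pr.
Qed.
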